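(* Let $K$ be a commutative ring of characteristic $0$ with unit and $M$ a multiplicative $\mathbb{R}$-vector subspace of $\mathcal{H}^{>0}$. Let $F_\nu\in K((M))$ be nonzero for $\nu\in\mathbb{N}$, assume that each $F_\nu$ has $M$-natural support and that the sequence $(\operatorname{lm}(F_\nu):\nu\in\mathbb{N})$ is decreasing and coinitial in $M$. Then $\sum_\nu F_\nu$ has $M$-natural support.
   Context: $\mathcal{H}$ is the Hardy field of germs at $+\infty$ of unary functions definable in $\mathbb{R}_{\mathrm{an},\exp}$, totally ordered by eventual comparison. $K((M))$ is the ring of formal series $\sum_{m\in M}a_mm$, $a_m\in K$, with anti-well-ordered support; $\operatorname{lm}(F)$ is the largest element of the support of nonzero $F$. A set $S\subseteq M$ is $M$-natural if $S\cap(a,+\infty)$ is finite for all $a\in M$; a series has $M$-natural support if its support is $M$-natural. Coinitial in $M$ means: for every $m\in M$ some term of the sequence is $\le m$. Under the hypotheses, the infinite sum $\sum_\nu F_\nu$ is defined coefficientwise and is an element of $K((M))$. *)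

From HB Require Import structures.
From mathcomp Require Import all_boot all_order all_algebra.
From mathcomp Require Import boolp classical_sets cardinality fsbigop.
Set Implicit Arguments. Unset Strict Implicit. Unset Printing Implicit Defensive.
Import Order.TTheory GRing.Theory.
Local Open Scope classical_set_scope.
Local Open Scope ring_scope.

(* A formal series sum_{m in M} a_m m in K((M)) is represented by its
   coefficient function F : M -> K. *)
Definition hsupport (K : nmodType) (M : Type) (F : M -> K) : set M :=
  [set m | F m != 0].

Definition anti_well_ordered d (M : orderType d) (S : set M) : Prop :=
  forall A : set M, A `<=` S -> A !=set0 ->
    exists m, A m /\ (forall x, A x -> (x <= m)%O).

Definition is_hahn_series (K : nmodType) d (M : orderType d) (F : M -> K) : Prop :=
  anti_well_ordered (hsupport F).

Definition is_lm (K : nmodType) d (M : orderType d) (F : M -> K) (m : M) : Prop :=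
  hsupport F m /\ (forall x, hsupport F x -> (x <= m)%O).

Definition M_natural d (M : orderType d) (S : set M) : Prop :=
  forall a : M, finite_set (S `&` [set m | (a < m)%O]).

Definition series_sum (K : nmodType) (M : Type) (F : nat -> M -> K) : M -> K :=
  fun m => \sum_(nu \in [set nu | F nu m != 0]) F nu m.

From HB Require Import structures.
From mathcomp Require Import all_boot all_order all_algebra.
From mathcomp Require Import boolp classical_sets cardinality fsbigop.
Set Implicit Arguments. Unset Strict Implicit.
Import Order.TTheory GRing.Theory.
Local Open Scope classical_set_scope.
Local Open Scope ring_scope.

(* Choose nu0 with lm(F_nu0) <= a. For nu >= nu0 the whole support of F_nu
   lies below lm(F_nu) <= lm(F_nu0) <= a, so above a the support of the sum
   is covered by the supports of the finitely many F_nu with nu < nu0, each of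
   which meets (a, +oo) in a finite set. *)

Lemma hsupport_series_sum (K : nmodType) (M : Type) (F : nat -> M -> K) :
  hsupport (series_sum F) `<=` \bigcup_nu hsupport (F nu).
Proof.
move=> m; apply: contraPP => no_term; rewrite /hsupport /series_sum /=.
have -> : [set nu | F nu m != 0] = set0.
  by apply/seteqP; split=> nu //= Fnu_m; apply: no_term; exists nu.
by rewrite fsbig_set0 eqxx.
Qed.

Lemma M_natural_bigcup d (M : orderType d) (I : Type) (D : set I)
    (S : I -> set M) :
  finite_set D -> (forall i, D i -> M_natural (S i)) ->
  M_natural (\bigcup_(i in D) S i).
Proof.
move=> finD natS a; rewrite setI_bigcupl.
by apply: bigcup_finite => // i /natS.
Qed.

Lemma hsupport_series_sum_gt (K : nmodType) d (M : orderType d)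
    (F : nat -> M -> K) (l : nat -> M) (nu0 : nat) (a : M) :
  (forall nu, is_lm (F nu) (l nu)) ->
  (forall i j : nat, (i <= j)%N -> (l j <= l i)%O) ->
  (l nu0 <= a)%O ->
  hsupport (series_sum F) `&` [set m | (a < m)%O]
    `<=` \bigcup_(nu in `I_nu0) hsupport (F nu).
Proof.
move=> l_lm l_decr l_nu0_le m [sum_m a_lt_m].
have [nu _ Fnu_m] := hsupport_series_sum sum_m.
exists nu => //=; rewrite ltnNge; apply/negP => le_nu0_nu.
have m_le_a : (m <= a)%O.
  apply: le_trans ((l_lm nu).2 _ Fnu_m) _.
  exact: le_trans (l_decr _ _ le_nu0_nu) l_nu0_le.
by move: a_lt_m; rewrite /= ltNge m_le_a.
Qed.

Theorem lemma5p6 (K : comNzRingType)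
  (charK0 : forall n : nat, (n.+1)%:R != 0 :> K)
  (d : Order.disp_t) (M : orderType d)
  (F : nat -> M -> K)
  (F_hahn : forall nu, is_hahn_series (F nu))
  (F_nz : forall nu, exists m, F nu m != 0)
  (F_nat : forall nu, M_natural (hsupport (F nu)))
  (l : nat -> M) (l_lm : forall nu, is_lm (F nu) (l nu))
  (l_decr : forall i j : nat, (i <= j)%N -> (l j <= l i)%O)
  (l_coinit : forall m : M, exists nu, (l nu <= m)%O) :
  M_natural (hsupport (series_sum F)).
Proof.
move=> a; have [nu0 l_nu0_le] := l_coinit a.
have nat_head : M_natural (\bigcup_(nu in `I_nu0) hsupport (F nu)).
  by apply: M_natural_bigcup => [|nu _]; [exact: finite_II | exact: F_nat].
apply: sub_finite_set (nat_head a).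
move=> m sum_m; split; last exact: sum_m.2.
exact: hsupport_series_sum_gt l_nu0_le _ sum_m.
Qed.
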